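(* Let $d\ge 1$ and $L\ge 2$, and let $|\phi_{\mathrm{w},d}(\theta)\rangle$ be the $d$-dimensional Ising whip state defined in the context. Then, with $\theta_d=\pi/(2d)$, $$|\phi_{\mathrm{w},d}(-\theta_d)\rangle=\tfrac{1}{\sqrt2}\big(|0\rangle^{\otimes L^d}+|1\rangle^{\otimes L^d}\big),\qquad |\phi_{\mathrm{w},d}(\theta_d)\rangle=\tfrac{1}{\sqrt2}\big(|s\rangle+|\bar s\rangle\big),$$ where $|s\rangle$ is the computational basis state with bit $s_x=(x_1+\dots+x_d)\bmod 2$ at site $x$ and $|\bar s\rangle$ is its bitwise complement. Consequently these are ground states of $H_J=J\sum_{\langle i,j\rangle}Z_iZ_j$ (sum over nearest-neighbour pairs of the lattice) for $J=-1$ and $J=+1$ respectively, with energy $-d(L-1)L^{d-1}$.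
   Context: Lattice $\Lambda=\{0,\dots,L-1\}^d$ with one qubit per site, $N=L^d$. Directed edges $x\to x+e_k$ ($e_k$ the $k$-th unit vector) whenever both endpoints lie in $\Lambda$. For a site $v$, $\deg^-(v)$ is the number of incoming edges. For each edge $u\to v$ define the gate $G_{u\to v}(\theta)=\exp\!\big(-\mathrm{i}\,\tfrac{d}{\deg^-(v)}\,\theta\, Z_uY_v/2\big)$, where $X,Y,Z$ are Pauli matrices. The whip state is $|\phi_{\mathrm{w},d}(\theta)\rangle=\prod G_{u\to v}(\theta)\,|+\rangle^{\otimes N}$, where $|+\rangle=(|0\rangle+|1\rangle)/\sqrt2$ and the gates are applied in order of increasing layer index $\sum_k v_k$ of the target $v$ (gates whose targets lie in the same layer commute, so their relative order is irrelevant). *)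

From HB Require Import structures.
From mathcomp Require Import all_boot all_order all_algebra.
From mathcomp Require Import reals trigo.
From mathcomp Require Import complex.
Set Implicit Arguments. Unset Strict Implicit. Unset Printing Implicit Defensive.
Import Order.TTheory GRing.Theory Num.Theory.
Local Open Scope ring_scope.

Section Whip.
Variables (R : realType) (d L : nat).

Definition site := {ffun 'I_d -> 'I_L}.
(* Computational-basis configurations: one bit per site (true = |1⟩). *)
Definition config := {ffun site -> bool}.
(* State vectors in (C^2)^{⊗N}: amplitudes indexed by basis configurations. *)
Definition state := config -> R[i].

Definition toC (x : R) : R[i] := Complex x 0.

Definition layer (x : site) : nat := \sum_(k < d) (x k : nat).

(* A directed edge x -> x + e_k is encoded by the pair (x, k);
   it is an edge iff x + e_k still lies in Λ. *)
Definition is_edge (e : site * 'I_d) : bool := ((e.1 e.2).+1 < L)%N.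
Definition tgt (e : site * 'I_d) : site :=
  [ffun j => if j == e.2 then insubd (e.1 j) (e.1 j).+1 else e.1 j].
Definition src (e : site * 'I_d) : site := e.1.

Definition indeg (v : site) : nat :=
  #|[set e : site * 'I_d | is_edge e && (tgt e == v)]|.

(* Pauli operators acting on states. Z|b⟩ = (-1)^b |b⟩,
   Y|0⟩ = i|1⟩, Y|1⟩ = -i|0⟩. *)
Definition flip (v : site) (c : config) : config :=
  [ffun x => if x == v then ~~ c x else c x].
Definition zsign (b : bool) : R[i] := if b then -1 else 1.
Definition Zop (u : site) (psi : state) : state := fun c => zsign (c u) * psi c.
Definition Yop (v : site) (psi : state) : state :=
  fun c => (if c v then Complex 0 1 else Complex 0 (-1)) * psi (flip v c).

(* exp(-i α P) for the Pauli string P = Z_u Y_v (P^2 = 1):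
   exp(-i α P) = cos α · 1 - i sin α · P. *)
Definition expPauliZY (alpha : R) (u v : site) (psi : state) : state :=
  fun c => (toC (cos alpha)) * psi c
           - Complex 0 1 * (toC (sin alpha)) * Zop u (Yop v psi) c.

Definition gate (theta : R) (e : site * 'I_d) (psi : state) : state :=
  expPauliZY ((d%:R / (indeg (tgt e))%:R) * theta / 2) (src e) (tgt e) psi.

Definition edges_ordered : seq (site * 'I_d) :=
  sort (fun e1 e2 => layer (tgt e1) <= layer (tgt e2))%N
       [seq e <- enum {: site * 'I_d} | is_edge e].

Definition plus_state : state :=
  fun _ => (toC ((Num.sqrt 2)^-1 ^+ #|{: site}|)).

Definition whip_state (theta : R) : state :=
  foldl (fun psi e => gate theta e psi) plus_state edges_ordered.

Definition basis_state (b : config) : state := fun c => if c == b then 1 else 0.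

Definition ghz_state : state :=
  fun c => toC (Num.sqrt 2)^-1 *
           (basis_state [ffun => false] c + basis_state [ffun => true] c).

Definition s_config : config := [ffun x => odd (layer x)].
Definition sbar_config : config := [ffun x => ~~ odd (layer x)].
Definition neel_state : state :=
  fun c => toC (Num.sqrt 2)^-1 * (basis_state s_config c + basis_state sbar_config c).

(* H_J = J Σ_{⟨i,j⟩} Z_i Z_j; each nearest-neighbour pair is exactly one
   directed edge x -> x + e_k. *)
Definition ising_H (J : R) (psi : state) : state :=
  fun c => toC J * (\sum_(e : site * 'I_d | is_edge e)
                     zsign (c (src e)) * zsign (c (tgt e))) * psi c.

Definition inner (phi psi : state) : R[i] :=
  \sum_(c : config) conjc (phi c) * psi c.

Definition ground_state (H : state -> state) (E : R) (psi : state) : Prop :=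
  (exists c, psi c != 0) /\
  (forall c, H psi c = toC E * psi c) /\
  (forall phi : state, toC E * inner phi phi <= inner phi (H phi)).

End Whip.

From HB Require Import structures.
From mathcomp Require Import all_boot all_order all_algebra.
From mathcomp Require Import reals trigo.
From mathcomp Require Import complex.
From mathcomp Require Import ring lra.
From Stdlib Require Import FunctionalExtensionality.
Set Implicit Arguments. Unset Strict Implicit. Unset Printing Implicit Defensive.
Import Order.TTheory GRing.Theory Num.Theory.

(* When the gate of an edge u -> v is applied, every edge into u has already
   acted, so u carries a classical bit in each branch of the state; Z_u is then
   a sign and the gate rotates v in the real plane spanned by |0>, |1>.  The
   state is therefore at all times (1/sqrt 2) times the sum over b of a product
   state, with the root (layer 0) in |b> and every other site in
   cos beta |0> + sin beta |1>, starting from beta = pi/4.  Each of the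
   deg^-(v) gates into v turns beta by +-pi/(4 deg^-(v)), the sign being
   that of the bit of the source, which is the same for all of them; so in
   the end beta is 0 or pi/2, and v carries the bit b (for theta < 0) or
   b xor (parity of v) (for theta > 0).  These cat states satisfy every bond
   of H_J, hence are ground states. *)

Section Lattice.
Variables d L : nat.
Local Notation edge := (site d L * 'I_d)%type.
Implicit Types (e : edge) (v w : site d L).

Lemma val_tgt e j : is_edge e ->
  (tgt e j : nat) = (if j == e.2 then (e.1 j).+1 else e.1 j).
Proof.
rewrite /is_edge => he; rewrite /tgt ffunE; case: eqP => [->|//].
by rewrite val_insubd he.
Qed.

Lemma layer_tgt e : is_edge e -> layer (tgt e) = (layer (src e)).+1.
Proof.
move=> he; rewrite /layer (bigD1 e.2) //= [in RHS](bigD1 e.2) //=.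
rewrite val_tgt // eqxx addSn; congr (_ + _).+1.
by apply: eq_bigr => j /negbTE hj; rewrite val_tgt // hj.
Qed.

Lemma src_neq_tgt e : is_edge e -> src e != tgt e.
Proof.
move=> he; apply/negP => /eqP h.
by have := layer_tgt he; rewrite -h => /eqP; rewrite ltn_eqF.
Qed.

Lemma layer_eq0_uniq v w : layer v = 0 -> layer w = 0 -> v = w.
Proof.
have coord0 (x : site d L) k : layer x = 0 -> (x k : nat) = 0.
  by move=> h; apply/eqP; rewrite -leqn0 -h /layer (bigD1 k) //= leq_addr.
move=> hv hw; apply/ffunP => k; apply: val_inj => /=.
by rewrite (coord0 v k hv) (coord0 w k hw).
Qed.

Lemma indeg_gt0 v : layer v != 0 -> 0 < indeg v.
Proof.
move=> hv; case: (pickP (fun k => 0 < v k)) => [k hk | h]; last first.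
  by move: hv; rewrite /layer big1 // => k _; apply/eqP; rewrite -leqn0 leqNgt h.
pose u : site d L := [ffun j => if j == k then insubd (v k) (v k).-1 else v j].
have uk : (u k : nat) = (v k).-1.
  by rewrite ffunE eqxx val_insubd (leq_ltn_trans (leq_pred _) (ltn_ord _)).
have he : is_edge (u, k) by rewrite /is_edge /= uk prednK.
have ht : tgt (u, k) = v.
  apply/ffunP => j; apply: val_inj => /=; rewrite val_tgt //=.
  case: eqP => [->|/eqP hj]; first by rewrite uk prednK.
  by rewrite ffunE (negbTE hj).
by apply/card_gt0P; exists (u, k); rewrite inE he ht eqxx.
Qed.

Lemma count_tgt_indeg (P : seq edge) v :
  uniq P -> (forall e, e \in P -> is_edge e) ->
  (forall e, is_edge e -> tgt e = v -> e \in P) ->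
  count (fun e => tgt e == v) P = indeg v.
Proof.
move=> uP sP into_v; rewrite /indeg -size_filter.
have /card_uniqP <- := filter_uniq (fun e => tgt e == v) uP.
apply: eq_card => e; rewrite inE mem_filter.
apply/andP/andP => [[/eqP ht eP]|[he /eqP ht]].
  by split; [apply: sP | apply/eqP].
by split; [apply/eqP | apply: into_v].
Qed.

Lemma mem_edges_ordered e : (e \in edges_ordered d L) = is_edge e.
Proof. by rewrite mem_sort mem_filter mem_enum andbT. Qed.

Lemma uniq_edges_ordered : uniq (edges_ordered d L).
Proof. by rewrite sort_uniq filter_uniq // enum_uniq. Qed.

Lemma edges_into_src_before s1 e s2 : edges_ordered d L = s1 ++ e :: s2 ->
  forall e', is_edge e' -> tgt e' = src e -> e' \in s1.
Proof.
move=> def_s e' he' ht.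
have he : is_edge e by rewrite -mem_edges_ordered def_s mem_cat mem_head orbT.
have : e' \in edges_ordered d L by rewrite mem_edges_ordered.
rewrite def_s mem_cat inE => /or3P [// | /eqP ee' | e's2].
  by move: (src_neq_tgt he); rewrite -ht ee' eqxx.
have : pairwise (fun e1 e2 : edge => layer (tgt e1) <= layer (tgt e2))
         (edges_ordered d L).
  by rewrite -sorted_pairwise; [apply: sort_sorted => ? ?; apply: leq_total
                               | move=> ? ? ?; apply: leq_trans].
rewrite def_s pairwise_cat /= => /and3P [_ _ /andP [/allP e_le _]].
by have := e_le e' e's2; rewrite ht layer_tgt // ltnn.
Qed.

Lemma card_ord_succ_lt n : #|[pred i : 'I_n | i.+1 < n]| = n.-1.
Proof.
case: n => [|n].
  by apply/eqP; rewrite -leqn0 (leq_trans (max_card _)) ?card_ord.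
have -> : n.+1.-1 = #|predC1 (@ord_max n)| by rewrite cardC1 card_ord.
apply: eq_card => i; rewrite !inE ltnS.
by rewrite ltn_neqAle -ltnS ltn_ord andbT -val_eqE.
Qed.

Lemma card_edges_dir k :
  #|[pred x : site d L | (x k).+1 < L]| = (L.-1 * L ^ d.-1)%N.
Proof.
pose F j : pred 'I_L := if j == k then [pred i : 'I_L | i.+1 < L] else predT.
have -> : #|[pred x : site d L | (x k).+1 < L]| = #|(family F : simpl_pred _)|.
  apply: eq_card => x; rewrite !inE; apply/idP/familyP => [h j|h].
    by rewrite /F; case: eqP => [->|].
  by have := h k; rewrite /F eqxx.
rewrite card_family foldrE big_image /= (bigD1 k) //= /F eqxx card_ord_succ_lt.
congr (_ * _)%N; rewrite (eq_bigr (fun _ => L)); last first.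
  by move=> j /negbTE ->; rewrite card_ord.
by rewrite prod_nat_const cardC1 card_ord.
Qed.

Lemma card_edges : #|[pred e : edge | is_edge e]| = (d * (L - 1) * L ^ (d - 1))%N.
Proof.
rewrite -sum1_card big_mkcond /= -(pair_big xpredT xpredT
  (fun x k => if is_edge (x, k) then 1 else 0)%N) /= exchange_big /=.
rewrite (eq_bigr (fun _ => L.-1 * L ^ d.-1)%N); last first.
  move=> k _; rewrite -(card_edges_dir k) -sum1_card [RHS]big_mkcond /=.
  by apply: eq_bigr => x _; rewrite inE.
by rewrite sum_nat_const card_ord !subn1 mulnA.
Qed.

End Lattice.

Local Open Scope ring_scope.
Local Open Scope complex_scope.

Section RealAmplitudes.
Variables (R : realType) (d L : nat).
Local Notation edge := (site d L * 'I_d)%type.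
Implicit Types (e : edge) (u v w : site d L) (c : config d L).

Definition rsign (b : bool) : R := if b then -1 else 1.

Lemma rsign_addb a b : rsign a * rsign b = rsign (a (+) b).
Proof. by case: a; case: b; rewrite /rsign /=; ring. Qed.

Lemma toCE (x : R) : toC x = x%:C.
Proof. by []. Qed.

Lemma zsignE b : zsign R b = (rsign b)%:C.
Proof. by case: b; rewrite /zsign /rsign ?rmorphN1 ?rmorph1. Qed.

Definition qamp (be : R) (x : bool) : R := if x then sin be else cos be.

Definition gate_angle (th : R) e : R := d%:R / (indeg (tgt e))%:R * th / 2.

(* exp(-i al Z_u Y_v) acting on real amplitudes, where it stays real. *)
Definition rgate (al : R) u v (f : config d L -> R) : config d L -> R :=
  fun c => cos al * f c - rsign (c v) * rsign (c u) * sin al * f (flip v c).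

Lemma gate_real th e (f : config d L -> R) :
  gate th e (fun c => toC (f c)) =
  (fun c => toC (rgate (gate_angle th e) (src e) (tgt e) f c)).
Proof.
apply: functional_extensionality => c.
rewrite /gate /expPauliZY /Zop /Yop /rgate /gate_angle /zsign /rsign.
by case: (c (tgt e)); case: (c (src e)); apply/eqP;
  rewrite eq_complex /=; apply/andP; split; apply/eqP; ring.
Qed.

Lemma qamp_rotate be al x z :
  cos al * qamp be x - rsign x * rsign z * sin al * qamp be (~~ x)
  = qamp (be + rsign z * al) x.
Proof.
by rewrite /qamp /rsign; case: x; case: z;
  rewrite /= ?mulN1r ?mul1r ?sinD ?cosD ?sinN ?cosN; ring.
Qed.

Lemma cos_piquarter : cos (pi / 4%:R) = (Num.sqrt 2)^-1 :> R.
Proof.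
have sc : sin (pi / 4%:R) = cos (pi / 4%:R) :> R.
  by rewrite -cosBpihalf -cosN; congr cos; field.
have c2 : cos (pi / 4%:R) ^+ 2 = 2^-1 :> R.
  by have := cos2Dsin2 (pi / 4%:R : R); rewrite sc; lra.
have c_gt0 : 0 < cos (pi / 4%:R) :> R.
  by apply: cos_gt0_pihalf; have := @pi_gt0 R; lra.
by rewrite -sqrtrV // -c2 sqrtr_sqr gtr0_norm.
Qed.

Lemma sin_piquarter : sin (pi / 4%:R) = (Num.sqrt 2)^-1 :> R.
Proof. by rewrite -cos_piquarter -cosBpihalf -cosN; congr cos; field. Qed.

Lemma qamp_piquarterD s x :
  qamp (pi / 4%:R + rsign s * (pi / 4%:R)) x = (x == ~~ s)%:R.
Proof.
case: s; rewrite /rsign /=.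
  rewrite (_ : _ + _ = 0); last by ring.
  by case: x; rewrite /qamp ?sin0 ?cos0.
rewrite (_ : _ + _ = pi / 2); last by field.
by case: x; rewrite /qamp ?sin_pihalf ?cos_pihalf.
Qed.

Lemma rgateZ al u v (k : R) (f : config d L -> R) c :
  rgate al u v (fun c' => k * f c') c = k * rgate al u v f c.
Proof. by rewrite /rgate; ring. Qed.

Lemma rgate_sum (I : Type) (r : seq I) al u v (F : I -> config d L -> R) c :
  rgate al u v (fun c' => \sum_(i <- r) F i c') c = \sum_(i <- r) rgate al u v (F i) c.
Proof.
elim: r => [|i r IH]; first by rewrite /rgate !big_nil; ring.
by rewrite big_cons -IH /rgate !big_cons; ring.
Qed.

Lemma rgate_product al u v (t : site d L -> bool -> R) bu be c : u != v ->
  (forall x, t u x = (x == bu)%:R) -> (forall x, t v x = qamp be x) ->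
  rgate al u v (fun c' => \prod_w t w (c' w)) c =
  \prod_w (if w == v then qamp (be + rsign bu * al) else t w) (c w).
Proof.
move=> uv tu tv; set rest := \prod_(w | w != v) t w (c w).
have flip_prod : \prod_w t w (flip v c w) = t v (~~ c v) * rest.
  rewrite (bigD1 v) //= /flip ffunE eqxx; congr (_ * _).
  by apply: eq_bigr => w wv; rewrite ffunE (negbTE wv).
have new_prod : \prod_w (if w == v then qamp (be + rsign bu * al) else t w) (c w)
    = qamp (be + rsign bu * al) (c v) * rest.
  rewrite (bigD1 v) //= eqxx; congr (_ * _).
  by apply: eq_bigr => w /negbTE ->.
rewrite /rgate flip_prod new_prod (bigD1 v) //= -/rest !tv.
case: (eqVneq (c u) bu) => [<- | cu]; first by rewrite -qamp_rotate; ring.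
have -> : rest = 0 by rewrite /rest (bigD1 u) //= tu (negbTE cu) mul0r.
by ring.
Qed.

End RealAmplitudes.

Arguments rsign {R} b.

Section IsingGroundStates.
Variables (R : realType) (d L : nat).
Local Notation nbonds := #|[pred e : site d L * 'I_d | is_edge e]|.
Implicit Types (c : config d L) (psi : state R d L).

Definition cat_state (a b : config d L) : state R d L :=
  fun c => toC (Num.sqrt 2)^-1 * (basis_state R a c + basis_state R b c).

Variable J : R.

Definition bond_energy c : R :=
  \sum_(e | is_edge e) J * rsign (c (src e)) * rsign (c (tgt e)).

Definition satisfies_bonds c : Prop :=
  forall e, is_edge e -> J * rsign (c (src e)) * rsign (c (tgt e)) = - `|J|.

Lemma ising_HE psi c : ising_H J psi c = toC (bond_energy c) * psi c.
Proof.
rewrite /ising_H /bond_energy !toCE mulr_sumr rmorph_sum; congr (_ * _).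
by apply: eq_bigr => e _; rewrite !zsignE !rmorphM mulrA.
Qed.

Lemma bond_energy_ge c : - `|J| * nbonds%:R <= bond_energy c.
Proof.
rewrite mulr_natr -sumr_const; apply: ler_sum => e _.
have := ler_norm J; have := ler_norm (- J); rewrite normrN.
by case: (c (src e)); case: (c (tgt e)); rewrite /rsign; lra.
Qed.

Lemma ground_state_of_bonds psi : (exists c, psi c != 0) ->
  (forall c, psi c != 0 -> satisfies_bonds c) ->
  ground_state (ising_H J) (- `|J| * nbonds%:R) psi.
Proof.
move=> nz sat; split => //; split => [c | phi].
  rewrite ising_HE; have [->|/sat bonds] := eqVneq (psi c) 0; first by rewrite !mulr0.
  by rewrite /bond_energy (eq_bigr _ bonds) sumr_const mulr_natr.
rewrite /inner -subr_ge0 mulr_sumr -sumrB; apply: sumr_ge0 => c _.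
rewrite ising_HE (_ : _ - _ = toC (bond_energy c - - `|J| * nbonds%:R) *
                              (phi c * conjc (phi c))).
  by rewrite mulr_ge0 ?mulcJ_ge0 // toCE ler0c subr_ge0 bond_energy_ge.
by rewrite !toCE rmorphB; ring.
Qed.

Lemma cat_state_ground a b : a != b -> satisfies_bonds a -> satisfies_bonds b ->
  ground_state (ising_H J) (- `|J| * nbonds%:R) (cat_state a b).
Proof.
move=> ab sat_a sat_b; apply: ground_state_of_bonds.
  exists a; rewrite /cat_state /basis_state eqxx (negbTE ab) addr0 mulr1 toCE.
  by rewrite (inj_eq (@complexI _)) invr_eq0 sqrtr_eq0 -ltNge ltr0n.
move=> c; rewrite /cat_state /basis_state.
have [-> // | ca] := eqVneq c a; have [-> // | cb] := eqVneq c b.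
by rewrite addr0 mulr0 eqxx.
Qed.

End IsingGroundStates.

Section WhipDynamics.
Variables (R : realType) (d L : nat).
Hypotheses (d_gt0 : (0 < d)%N) (L_gt0 : (0 < L)%N).
Local Notation edge := (site d L * 'I_d)%type.
Local Notation nbonds := #|[pred e : edge | is_edge e]|.
Implicit Types (e : edge) (P : seq edge) (u v w : site d L) (c : config d L).

(* [neel = false] is the case theta = -theta_d, [neel = true] is theta_d. *)
Variable neel : bool.

Definition whip_sign : R := rsign (~~ neel).
Definition whip_angle : R := whip_sign * (pi / (2 * d)%:R).

Definition target_config (b : bool) : config d L :=
  [ffun v => b (+) (neel && odd (layer v))].

Definition branch_angle P b v : R :=
  pi / 4%:R + \sum_(e <- P | tgt e == v)
                rsign (target_config b (src e)) * gate_angle whip_angle e.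

Definition branch_amp P b v (x : bool) : R :=
  if layer v == 0 then (x == b)%:R else qamp (branch_angle P b v) x.

Definition whip_amp P c : R :=
  \sum_(b : bool) (Num.sqrt 2)^-1 * \prod_v branch_amp P b v (c v).

Lemma branch_amp_complete P b v x :
  uniq P -> (forall e, e \in P -> is_edge e) ->
  (forall e, is_edge e -> tgt e = v -> e \in P) ->
  branch_amp P b v x = (x == target_config b v)%:R.
Proof.
move=> uP sP into_v; rewrite /branch_amp ffunE.
have [-> | v_ne0] := eqVneq (layer v) 0%N; first by rewrite andbF addbF.
set bs := b (+) (neel && ~~ odd (layer v)).
have src_bit e : e \in P -> tgt e == v -> target_config b (src e) = bs.
  move=> /sP he /eqP ht.
  by rewrite ffunE /bs -ht layer_tgt //= negbK.
have indeg_v := indeg_gt0 v_ne0.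
rewrite /branch_angle big_seq_cond (eq_bigr (fun _ =>
  rsign bs * (d%:R / (indeg v)%:R * whip_angle / 2))); last first.
  by move=> e /andP [eP tv]; rewrite src_bit // /gate_angle (eqP tv).
rewrite -big_seq_cond big_const_seq iter_addr_0 count_tgt_indeg //.
rewrite -[_ *+ indeg v]mulr_natr.
rewrite (_ : rsign bs * _ * _ = rsign (bs (+) ~~ neel) * (pi / 4%:R)).
  clear src_bit; rewrite qamp_piquarterD {}/bs.
  by case: neel; case: b; case: (odd _).
rewrite -rsign_addb /whip_angle /whip_sign natrM; field.
by rewrite !pnatr_eq0 -!lt0n d_gt0 indeg_v.
Qed.

Lemma branch_amp_rcons P e b w x : is_edge e ->
  branch_amp (rcons P e) b w x =
  (if w == tgt e then qamp (branch_angle P b (tgt e)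
                            + rsign (target_config b (src e)) * gate_angle whip_angle e)
   else branch_amp P b w) x.
Proof.
move=> he; have [-> | wv] := eqVneq w (tgt e).
  by rewrite /branch_amp layer_tgt // /branch_angle big_rcons /= eqxx addrA.
rewrite /branch_amp /branch_angle big_rcons [tgt e == w]eq_sym (negbTE wv).
by rewrite /= addr0.
Qed.

Lemma whip_amp_rcons P e c : is_edge e ->
  uniq P -> (forall e', e' \in P -> is_edge e') ->
  (forall e', is_edge e' -> tgt e' = src e -> e' \in P) ->
  rgate (gate_angle whip_angle e) (src e) (tgt e) (whip_amp P) c =
  whip_amp (rcons P e) c.
Proof.
move=> he uP sP into_src; rewrite /whip_amp rgate_sum; apply: eq_bigr => b _.
have control x : branch_amp P b (src e) x = (x == target_config b (src e))%:R.
  exact: branch_amp_complete.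
have target x : branch_amp P b (tgt e) x = qamp (branch_angle P b (tgt e)) x.
  by rewrite /branch_amp layer_tgt.
rewrite rgateZ (rgate_product _ _ (src_neq_tgt he) control target).
by congr (_ * _); apply: eq_bigr => w _; rewrite branch_amp_rcons.
Qed.

Lemma whip_amp_nil c : whip_amp [::] c = (Num.sqrt 2)^-1 ^+ #|{: site d L}|.
Proof.
pose root : site d L := [ffun => Ordinal L_gt0].
have root0 : layer root = 0%N by rewrite /layer big1 // => k _; rewrite ffunE.
have amp0 b v x : branch_amp [::] b v x =
    if v == root then (x == b)%:R else (Num.sqrt 2)^-1.
  rewrite /branch_amp /branch_angle big_nil addr0.
  have [-> | v_root] := eqVneq v root; first by rewrite root0.
  have -> : (layer v == 0%N) = false.
    by apply/negbTE/eqP => /layer_eq0_uniq/(_ root0) /eqP; apply/negP.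
  by case: x; rewrite /qamp ?sin_piquarter ?cos_piquarter.
have card_site : #|{: site d L}| = (#|{: site d L}|.-1).+1.
  by rewrite prednK //; apply/card_gt0P; exists root.
have prod0 b : \prod_v branch_amp [::] b v (c v) =
    (c root == b)%:R * (Num.sqrt 2)^-1 ^+ #|{: site d L}|.-1.
  rewrite (bigD1 root) // amp0 eqxx; congr (_ * _).
  rewrite (eq_bigr (fun _ => (Num.sqrt 2)^-1)) => [|v /negbTE v_root]; last first.
    by rewrite amp0 v_root.
  by rewrite prodr_const -(cardC1 root); congr (_ ^+ _);
    apply: eq_card => i; rewrite !inE.
rewrite /whip_amp big_bool !prod0 [in RHS]card_site exprS.
by move: #|_|.-1 => n; case: (c root); rewrite /=; ring.
Qed.

Lemma whip_state_prefix s1 s2 : edges_ordered d L = s1 ++ s2 ->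
  foldl (fun psi e => gate whip_angle e psi) (@plus_state R d L) s1 =
  (fun c => toC (whip_amp s1 c)).
Proof.
elim/last_ind: s1 s2 => [|s e IH] s2 def_s.
  by apply: functional_extensionality => c; rewrite /= /plus_state whip_amp_nil.
have def_s' : edges_ordered d L = s ++ e :: s2 by rewrite def_s cat_rcons.
have : uniq (rcons s e ++ s2) by rewrite -def_s uniq_edges_ordered.
rewrite cat_uniq rcons_uniq => /andP [/andP [_ uP] _].
rewrite foldl_rcons (IH _ def_s') gate_real.
apply: functional_extensionality => c; congr toC; apply: whip_amp_rcons.
- by rewrite -mem_edges_ordered def_s' mem_cat mem_head orbT.
- exact: uP.
- by move=> e' e's; rewrite -mem_edges_ordered def_s' mem_cat e's.
- exact: edges_into_src_before def_s'.
Qed.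

Lemma whip_amp_edges c : whip_amp (edges_ordered d L) c =
  \sum_(b : bool) (Num.sqrt 2)^-1 * (c == target_config b)%:R.
Proof.
rewrite /whip_amp; apply: eq_bigr => b _; congr (_ * _).
have amp_bit v x : branch_amp (edges_ordered d L) b v x = (x == target_config b v)%:R.
  apply: branch_amp_complete => [|e|e he _];
    by rewrite ?uniq_edges_ordered ?mem_edges_ordered.
under eq_bigr do rewrite amp_bit.
have [-> | c_ne] := eqVneq c (target_config b).
  by rewrite big1 // => v _; rewrite eqxx.
have [v cv | c_eq] := pickP (fun v => c v != target_config b v).
  by rewrite (bigD1 v) //= (negbTE cv) mul0r.
by case/eqP: c_ne; apply/ffunP => v; apply/eqP/negbFE; rewrite c_eq.
Qed.

Lemma whip_state_cat :
  @whip_state R d L whip_angle = cat_state R (target_config false) (target_config true).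
Proof.
rewrite /whip_state (@whip_state_prefix _ [::]) ?cats0 //.
apply: functional_extensionality => c.
rewrite whip_amp_edges big_bool /cat_state /basis_state !toCE.
rewrite rmorphD !rmorphM !rmorph_nat.
by case: (c == _); case: (c == _); rewrite /=; ring.
Qed.

Lemma target_config_bonds b : satisfies_bonds whip_sign (target_config b).
Proof.
move=> e he; rewrite -mulrA rsign_addb !ffunE layer_tgt //=.
rewrite /whip_sign; case: neel; case: b; case: (odd _);
  by rewrite /rsign /= ?normrN normr1; lra.
Qed.

Lemma whip_state_ground :
  ground_state (ising_H whip_sign) (- nbonds%:R) (@whip_state R d L whip_angle).
Proof.
have norm_sign : `|whip_sign| = 1.
  by rewrite /whip_sign /rsign; case: neel; rewrite /= ?normrN normr1.
have -> : - nbonds%:R = - `|whip_sign| * nbonds%:R by rewrite norm_sign mulN1r.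
rewrite whip_state_cat.
apply: cat_state_ground (target_config_bonds _) (target_config_bonds _).
pose root : site d L := [ffun => Ordinal L_gt0].
apply/eqP => /(congr1 (fun c : config d L => c root)).
by rewrite !ffunE; case: (_ && _).
Qed.

End WhipDynamics.

Theorem mainTheorem1 (R : realType) (d L : nat) (hd : (1 <= d)%N) (hL : (2 <= L)%N) :
  let theta_d : R := pi / (2 * d)%:R in
  let E : R := - ((d * (L - 1) * L ^ (d - 1))%N)%:R in
  @whip_state R d L (- theta_d) = @ghz_state R d L /\
  @whip_state R d L theta_d = @neel_state R d L /\
  @ground_state R d L (@ising_H R d L (-1)) E (@whip_state R d L (- theta_d)) /\
  @ground_state R d L (@ising_H R d L 1) E (@whip_state R d L theta_d).
Proof.
move=> theta_d E.
have L_gt0 : (0 < L)%N by apply: ltnW.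
have -> : - theta_d = whip_angle R d false by rewrite /whip_angle /= mulN1r.
have -> : theta_d = whip_angle R d true by rewrite /whip_angle /= mul1r.
have -> : E = - #|[pred e : site d L * 'I_d | is_edge e]|%:R by rewrite card_edges.
have ghz_targets b : target_config d L false b = [ffun => b].
  by apply/ffunP => v; rewrite !ffunE addbF.
have neel_target_s : target_config d L true false = s_config d L.
  by apply/ffunP => v; rewrite !ffunE.
have neel_target_sbar : target_config d L true true = sbar_config d L.
  by apply/ffunP => v; rewrite !ffunE.
split; first by rewrite whip_state_cat // !ghz_targets.
split; first by rewrite whip_state_cat // neel_target_s neel_target_sbar.
by split; apply: whip_state_ground.
Qed.
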